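(* A finite relational structure $\mathcal H$ is strongly $2$-rectangular if and only if it is strongly $2$-balanced.
   Context: For a prime $p$, a relation is $p$-mpp-definable in $\mathcal H$ if it is defined by a formula of the form $\exists^{\equiv p}\mathbf y_1\exists^{\equiv p}\mathbf y_2\cdots\exists^{\equiv p}\mathbf y_s\,\Phi$, where $\Phi$ is a conjunction of atomic formulas using relations of $\mathcal H$ and equality, the $\mathbf y_j$ are (groups of) variables, and $\exists^{\equiv p}\mathbf y\,\Psi(\mathbf x,\mathbf y)$ holds for $\mathbf a$ iff the number of $\mathbf b$ with $\Psi(\mathbf a,\mathbf b)$ true is not divisible by $p$. $\langle\mathcal H\rangle_p$ is the set of all relations $p$-mpp-definable in $\mathcal H$. A binary relation $\mathcal R\subseteq A_1\times A_2$ is rectangular if $(a,c),(a,d),(b,c)\in\mathcal R$ implies $(b,d)\in\mathcal R$. An $n$-ary relation $\mathcal R$ ($n\ge2$) is rectangular if for every nonempty $I\subsetneq[n]$, $\mathcal R$ viewed as a binary relation between $\mathrm{pr}_I\mathcal R$ and $\mathrm{pr}_{[n]\setminus I}\mathcal R$ is rectangular. $\mathcal H$ is strongly $p$-rectangular if every relation in $\langle\mathcal H\rangle_p$ of arity at least 2 is rectangular. A matrix is a rank-1 block matrix if after permuting rows and columns it is block-diagonal (blocks not necessarily square) with every nonzero block of rank at most 1. A ternary relation $\mathcal R\subseteq A_1\times A_2\times A_3$ is $p$-balanced if the matrix $M_{\mathcal R}\in\mathbb Z_p^{A_1\times A_2}$, $M_{\mathcal R}[x,y]=|\{z:(x,y,z)\in\mathcal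 R\}|\bmod p$, is a rank-1 block matrix over $\mathbb Z_p$; a relation of higher arity $n$ is $p$-balanced if every representation of it as a ternary relation $\subseteq H^k\times H^\ell\times H^{n-k-\ell}$ (grouping coordinates) is $p$-balanced. $\mathcal H$ is strongly $p$-balanced if every relation in $\langle\mathcal H\rangle_p$ is $p$-balanced. *)

From HB Require Import structures.
From Stdlib Require List.
From mathcomp Require Import all_boot all_order all_algebra.
Set Implicit Arguments. Unset Strict Implicit. Unset Printing Implicit Defensive.
Import GRing.Theory.
Local Open Scope ring_scope.

Section RelStruct.
Variable H : finType.

Definition structure := seq {n : nat & {set {ffun 'I_n -> H}}}.

Inductive atom (k : nat) : Type :=
  | RelAt (r : nat) (R : {set {ffun 'I_r -> H}}) (v : 'I_r -> 'I_k)
  | EqAt (i j : 'I_k).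

(* p-mpp formulas with k free variables:
   either a conjunction of atoms, or  exists^{=p} y Psi  where y is a group
   of m fresh variables (the last m variables of Psi's k+m variables). *)
Inductive mpp : nat -> Type :=
  | QF k : seq (atom k) -> mpp k
  | ExP k m : mpp (k + m) -> mpp k.

Definition join k m (a : 'I_k -> H) (b : 'I_m -> H) : 'I_(k + m) -> H :=
  fun i => match split i with inl j => a j | inr j => b j end.

Definition atom_eval k (t : atom k) (a : 'I_k -> H) : bool :=
  match t with
  | RelAt r R v => [ffun i => a (v i)] \in R
  | EqAt i j => a i == a j
  end.

Fixpoint mpp_eval (p : nat) k (phi : mpp k) : ('I_k -> H) -> bool :=
  match phi with
  | QF k l => fun a => all (fun t => atom_eval t a) l
  | ExP k m phi' => fun a =>
      (#|[pred b : {ffun 'I_m -> H} | mpp_eval p phi' (join a b)]| %% p != 0%N)%N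
  end.

Definition atom_ok (S : structure) k (t : atom k) : Prop :=
  match t with
  | RelAt r R v => List.In (existT _ r R) S
  | EqAt _ _ => True
  end.

Fixpoint mpp_ok (S : structure) k (phi : mpp k) : Prop :=
  match phi with
  | QF k l => forall t, List.In t l -> atom_ok S t
  | ExP k m phi' => mpp_ok S phi'
  end.

Definition mpp_definable (p : nat) (S : structure) n
    (R : {set {ffun 'I_n -> H}}) : Prop :=
  exists phi : mpp n, mpp_ok S phi /\
    forall a : {ffun 'I_n -> H}, (a \in R) = mpp_eval p phi a.

Definition rect2 (A B : Type) (R : A -> B -> bool) : Prop :=
  forall a b c d, R a c -> R a d -> R b c -> R b d.

Definition mix n (I : {set 'I_n}) (u w : {ffun 'I_n -> H}) : {ffun 'I_n -> H} :=
  [ffun i => if i \in I then u i else w i].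

(* R viewed as a binary relation between its I-part and its ([n]\I)-part:
   (u, w) is related iff the tuple formed from u|_I and w|_([n]\I) is in R. *)
Definition rectangular n (R : {set {ffun 'I_n -> H}}) : Prop :=
  forall I : {set 'I_n}, I != set0 -> I != setT ->
    rect2 (fun u w : {ffun 'I_n -> H} => mix I u w \in R).

Definition strongly_rectangular (p : nat) (S : structure) : Prop :=
  forall n (R : {set {ffun 'I_n -> H}}),
    mpp_definable p S R -> (1 < n)%N -> rectangular R.

(* Rank-1 block matrix: rows and columns can be distributed into s blocks
   (i.e. after permuting, the matrix is block diagonal) with all nonzero
   entries inside blocks, and every block of rank at most 1. *)
Definition rank1_block (F : fieldType) m n (M : 'M[F]_(m, n)) : Prop :=
  exists s (r : 'I_m -> 'I_s) (c : 'I_n -> 'I_s),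
    (forall i j, M i j != 0 -> r i = c j) /\
    forall b : 'I_s,
      (\rank (\matrix_(i, j) (if (r i == b) && (c j == b) then M i j else 0%R)) <= 1)%N.

Definition tri_tuple k l m n (e : (k + l + m)%N = n) (x : {ffun 'I_k -> H})
    (y : {ffun 'I_l -> H}) (z : {ffun 'I_m -> H}) : {ffun 'I_n -> H} :=
  [ffun i : 'I_n => join (join x y) z (cast_ord (esym e) i)].

Definition balance_matrix (p : nat) k l m n (e : (k + l + m)%N = n)
    (R : {set {ffun 'I_n -> H}}) :
    'M['F_p]_(#|{ffun 'I_k -> H}|, #|{ffun 'I_l -> H}|) :=
  \matrix_(i, j)
    (#|[pred z : {ffun 'I_m -> H} |
        tri_tuple e (enum_val i) (enum_val j) z \in R]|)%:R.

Definition balanced (p : nat) n (R : {set {ffun 'I_n -> H}}) : Prop :=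
  forall k l m (e : (k + l + m)%N = n), rank1_block (balance_matrix p e R).

Definition strongly_balanced (p : nat) (S : structure) : Prop :=
  forall n (R : {set {ffun 'I_n -> H}}), mpp_definable p S R -> balanced p R.

End RelStruct.

(* Over F_2 the entry (x, y) of the balance matrix of R is 1 exactly when an
   odd number of z satisfy (x, y, z) \in R.  This is a 2-mpp-definable
   relation in (x, y), and a 0/1 matrix is a rank-1 block matrix iff its
   support is rectangular.  Conversely, renaming the variables of R so that x
   supplies the coordinates in I and y the others, with no z-coordinates,
   turns the balance matrix into the indicator of R viewed along I. *)

From mathcomp Require Import all_boot all_order all_algebra.
Set Implicit Arguments. Unset Strict Implicit. Unset Printing Implicit Defensive.
Import GRing.Theory.
Local Open Scope ring_scope.

Section Definability.
Variables (H : finType) (p : nat) (S : structure H).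

Lemma join_lshift k m (a : 'I_k -> H) (b : 'I_m -> H) i : join a b (lshift m i) = a i.
Proof. by rewrite /join (unsplitK (inl _ : 'I_k + 'I_m)). Qed.

Lemma join_rshift k m (a : 'I_k -> H) (b : 'I_m -> H) i : join a b (rshift k i) = b i.
Proof. by rewrite /join (unsplitK (inr _ : 'I_k + 'I_m)). Qed.

Lemma eq_join k m (a a' : 'I_k -> H) (b b' : 'I_m -> H) :
  a =1 a' -> b =1 b' -> join a b =1 join a' b'.
Proof. by move=> eq_a eq_b i; rewrite /join; case: (split i). Qed.

Lemma eq_mpp_eval k (phi : mpp H k) (a a' : 'I_k -> H) :
  a =1 a' -> mpp_eval p phi a = mpp_eval p phi a'.
Proof.
elim: phi a a' => {k} [k l | k m phi IH] a a' eq_a /=.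
  apply: eq_all => -[r R v | i j] /=; last by rewrite !eq_a.
  by congr (_ \in R); apply: eq_ffun => i; rewrite eq_a.
congr (_ %% _ != _)%N; apply: eq_card => b; rewrite !inE.
exact/IH/eq_join.
Qed.

Definition ren_atom k k' (s : 'I_k -> 'I_k') (t : atom H k) : atom H k' :=
  match t with
  | RelAt r R v => RelAt R (s \o v)
  | EqAt i j => EqAt H (s i) (s j)
  end.

Definition lift_ren k k' m (s : 'I_k -> 'I_k') (i : 'I_(k + m)) : 'I_(k' + m) :=
  match split i with inl j => lshift m (s j) | inr j => rshift k' j end.

Lemma join_lift_ren k k' m (s : 'I_k -> 'I_k') (a : 'I_k' -> H) (b : 'I_m -> H) :
  join a b \o lift_ren s =1 join (a \o s) b.
Proof.
move=> i; rewrite /= /lift_ren [RHS]/join.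
by case: (split i) => j; rewrite ?join_lshift ?join_rshift.
Qed.

Lemma mpp_rename k (phi : mpp H k) k' (s : 'I_k -> 'I_k') : mpp_ok S phi ->
  exists2 phi' : mpp H k', mpp_ok S phi' &
    forall a, mpp_eval p phi' a = mpp_eval p phi (a \o s).
Proof.
elim: phi k' s => {k} [k l | k m phi IH] k' s ok.
  exists (QF (map (ren_atom s) l)) => [t | a /=].
    move=> /List.in_map_iff [t0 [<- l_t0]].
    by case: t0 l_t0 => [r R v | i j] l_t0 //=; apply: ok l_t0.
  by rewrite all_map; apply: eq_all => -[].
have [phi' ok' eval_phi'] := IH (k' + m)%N (lift_ren s) ok.
exists (ExP phi') => //= a; congr (_ %% _ != _)%N; apply: eq_card => b.
by rewrite !inE eval_phi'; apply/eq_mpp_eval/join_lift_ren.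
Qed.

Lemma mpp_definable_rename n k (s : 'I_n -> 'I_k) (R : {set {ffun 'I_n -> H}}) :
  mpp_definable p S R ->
  mpp_definable p S [set a : {ffun 'I_k -> H} | [ffun i => a (s i)] \in R].
Proof.
move=> [phi [ok def_R]]; have [phi' ok' eval_phi'] := mpp_rename s ok.
exists phi'; split=> // a; rewrite inE def_R eval_phi'.
by apply: eq_mpp_eval => i; rewrite ffunE.
Qed.

Lemma mpp_definable_count k m (R : {set {ffun 'I_(k + m) -> H}}) :
  mpp_definable p S R ->
  mpp_definable p S [set a : {ffun 'I_k -> H} |
    #|[pred b : {ffun 'I_m -> H} | [ffun i => join a b i] \in R]| %% p != 0]%N.
Proof.
move=> [phi [ok def_R]]; exists (ExP phi); split=> // a /=.
rewrite inE; congr (_ %% _ != _)%N; apply: eq_card => b; rewrite !inE def_R.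
by apply: eq_mpp_eval => i; rewrite ffunE.
Qed.

End Definability.

Section RectangularSupport.
Variables (F : fieldType) (m n : nat) (M : 'M[F]_(m, n)).

Lemma rank1_block_rows_le1 : (m <= 1)%N -> rank1_block M.
Proof.
move=> m_le1; exists 1%N, (fun _ => ord0), (fun _ => ord0); split=> // b.
exact: leq_trans (rank_leq_row _) m_le1.
Qed.

Lemma rank1_block_cols_le1 : (n <= 1)%N -> rank1_block M.
Proof.
move=> n_le1; exists 1%N, (fun _ => ord0), (fun _ => ord0); split=> // b.
exact: leq_trans (rank_leq_col _) n_le1.
Qed.

(* Within a block of rank at most 1, every row is a multiple of a fixed
   nonzero row i, so the columns where row i is nonzero carry the support. *)
Lemma rank1_block_rect_support : rank1_block M -> rect2 (fun i j => M i j != 0).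
Proof.
move=> [s [r [c [block_supp block_rank]]]] i i' j j' Mij Mij' Mi'j.
have rij := block_supp _ _ Mij; have rij' := block_supp _ _ Mij'.
have ri'j := block_supp _ _ Mi'j.
set N := \matrix_(x, y) (if (r x == r i) && (c y == r i) then M x y else 0).
have rowN_neq0 : row i N != 0.
  apply/eqP => /matrixP /(_ ord0 j); rewrite !mxE eqxx -rij eqxx /= => /eqP.
  by rewrite (negbTE Mij).
have N_sub_row : (N <= row i N)%MS.
  have [rank_le <-] := mxrank_leqif_sup (row_sub i N).
  by rewrite eqn_leq rank_le rank_rV rowN_neq0 block_rank.
have /sub_rVP [a row_i'] := submx_trans (row_sub i' N) N_sub_row.
have := congr1 (fun v : 'rV_n => v ord0 j) row_i'.
have := congr1 (fun v : 'rV_n => v ord0 j') row_i'.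
rewrite !mxE /= -rij -rij' ri'j rij !eqxx /= => -> Mi'j_eq.
rewrite mulf_neq0 //; apply: contraNneq Mi'j => a0.
by rewrite Mi'j_eq a0 mul0r.
Qed.

Hypothesis M01 : forall i j, M i j != 0 -> M i j = 1.
Hypothesis M_rect : rect2 (fun i j => M i j != 0).

Definition row_class (i : 'I_m) : 'I_n.+1 :=
  if [pick j | M i j != 0] is Some j then widen_ord (leqnSn n) j else ord_max.

Definition col_class (j : 'I_n) : 'I_n.+1 :=
  if [pick i | M i j != 0] is Some i then row_class i else ord_max.

Lemma row_classP i j : M i j != 0 ->
  exists2 j0, row_class i = widen_ord (leqnSn n) j0 & M i j0 != 0.
Proof.
move=> Mij; rewrite /row_class; case: pickP => [j0 Mij0|row_i0]; first by exists j0.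
by rewrite row_i0 in Mij.
Qed.

Lemma row_class_eq i i' j : M i j != 0 -> M i' j != 0 -> row_class i = row_class i'.
Proof.
move=> Mij Mi'j; rewrite /row_class.
rewrite (@eq_pick _ (fun j' => M i j' != 0) (fun j' => M i' j' != 0)) // => j' /=.
by apply/idP/idP => ?; [apply: M_rect Mij _ Mi'j | apply: M_rect Mi'j _ Mij].
Qed.

Lemma row_col_class i j : M i j != 0 -> row_class i = col_class j.
Proof.
move=> Mij; rewrite /col_class; case: pickP => [i0 Mi0j|col_j0].
  exact: row_class_eq Mij Mi0j.
by rewrite col_j0 in Mij.
Qed.

Lemma same_class_support i j : row_class i = col_class j ->
  [exists j, M i j != 0] -> [exists i, M i j != 0] -> M i j != 0.
Proof.
move=> classes /existsP [j1 Mij1] /existsP [i1 Mi1j].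
move: classes; rewrite /col_class; case: pickP => [i0 Mi0j|col_j0]; last first.
  by rewrite col_j0 in Mi1j.
have [j2 -> Mij2] := row_classP Mij1; have [j3 -> Mi0j3] := row_classP Mi0j.
move=> /(congr1 val) /= /val_inj j23; rewrite j23 in Mij2.
exact: M_rect Mi0j3 Mi0j Mij2.
Qed.

Lemma rect_support_rank1_block : rank1_block M.
Proof.
exists n.+1, row_class, col_class; split=> [i j /row_col_class // | b].
pose u : 'cV[F]_m := \col_i ((row_class i == b) && [exists j, M i j != 0])%:R.
pose v : 'rV[F]_n := \row_j ((col_class j == b) && [exists i, M i j != 0])%:R.
suff -> : \matrix_(i, j) (if (row_class i == b) && (col_class j == b) then M i j else 0)
    = u *m v by exact: leq_trans (mxrankM_maxr _ _) (rank_leq_row _).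
apply/matrixP => i j; rewrite !mxE big_ord1 !mxE.
have [<- | _] /= := eqVneq (row_class i) b; last by rewrite mul0r.
have [classes | _] /= := eqVneq (col_class j) (row_class i); last by rewrite mulr0.
have [Mij | /negPn /eqP Mij0] := boolP (M i j != 0).
  have row_i : [exists j, M i j != 0] by apply/existsP; exists j.
  have col_j : [exists i, M i j != 0] by apply/existsP; exists i.
  by rewrite row_i col_j mulr1 M01.
rewrite Mij0; have [row_i | _] := boolP [exists j, M i j != 0]; last by rewrite mul0r.
have [col_j | _] := boolP [exists i, M i j != 0]; last by rewrite mulr0.
by have := same_class_support (esym classes) row_i col_j; rewrite Mij0 eqxx.
Qed.

End RectangularSupport.

Lemma F2_neq0_eq1 (x : 'F_2) : x != 0 -> x = 1.
Proof. by case: x => -[|[|k]] lt_k //= _; apply: val_inj. Qed.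

Section Balance.
Variable H : finType.

Lemma tri_tupleE k l m (x : {ffun 'I_k -> H}) (y : {ffun 'I_l -> H}) (z : {ffun 'I_m -> H}) :
  tri_tuple (erefl (k + l + m)%N) x y z = [ffun t => join (join x y) z t].
Proof. by apply/ffunP => t; rewrite !ffunE cast_ord_id. Qed.

Lemma balance_matrix_neq0 q k l m (R : {set {ffun 'I_(k + l + m) -> H}}) i j :
  prime q ->
  (balance_matrix q (erefl _) R i j != 0) =
  (#|[pred z : {ffun 'I_m -> H} |
      [ffun t => join (join (enum_val i) (enum_val j)) z t] \in R]| %% q != 0)%N.
Proof.
move=> q_pr; rewrite mxE -(dvdn_pcharf (pchar_Fp q_pr)) /dvdn.
by congr (_ %% _ != _)%N; apply: eq_card => z; rewrite !inE tri_tupleE.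
Qed.

Lemma rectangular_join k l (R : {set {ffun 'I_(k + l) -> H}}) :
  rectangular R -> (0 < k)%N -> (0 < l)%N ->
  rect2 (fun (x : {ffun 'I_k -> H}) (y : {ffun 'I_l -> H}) => [ffun t => join x y t] \in R).
Proof.
move=> R_rect k_gt0 l_gt0 x x' y y'.
pose I := [set t : 'I_(k + l) | (t < k)%N].
have mix_join (x1 x2 : {ffun 'I_k -> H}) (y1 y2 : {ffun 'I_l -> H}) :
    mix I [ffun t => join x1 y1 t] [ffun t => join x2 y2 t] = [ffun t => join x1 y2 t].
  by apply/ffunP => t; rewrite !ffunE inE /join; case: splitP.
have I_neq0 : I != set0.
  by apply/set0Pn; exists (lshift l (Ordinal k_gt0)); rewrite inE.
have I_neqT : I != setT.
  apply/negP => /eqP I_T; have := in_setT (rshift k (Ordinal l_gt0)).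
  by rewrite -I_T inE /= addn0 ltnn.
have := R_rect I I_neq0 I_neqT [ffun t => join x y t] [ffun t => join x' y' t]
  [ffun t => join x y t] [ffun t => join x y' t].
by rewrite !mix_join.
Qed.

Lemma strongly_rectangular_balanced (S : structure H) :
  strongly_rectangular 2 S -> strongly_balanced 2 S.
Proof.
move=> S_rect n R def_R k l m e; case: n / e in R def_R *.
have [k0 | k_gt0] := posnP k.
  by subst k; apply: rank1_block_rows_le1; rewrite card_ffun card_ord.
have [l0 | l_gt0] := posnP l.
  by subst l; apply: rank1_block_cols_le1; rewrite card_ffun card_ord.
have kl_gt1 : (1 < k + l)%N by rewrite -(addn1 1) leq_add.
pose odd_count (a : {ffun 'I_(k + l) -> H}) :=
  (#|[pred z : {ffun 'I_m -> H} | [ffun t => join a z t] \in R]| %% 2 != 0)%N.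
have odd_count_join (x : {ffun 'I_k -> H}) (y : {ffun 'I_l -> H}) :
    odd_count [ffun t => join x y t] =
    (#|[pred z : {ffun 'I_m -> H} | [ffun t => join (join x y) z t] \in R]| %% 2 != 0)%N.
  congr (_ %% _ != _)%N; apply: eq_card => z; rewrite !inE.
  by congr (_ \in R); apply/eq_ffun/eq_join => // t; rewrite ffunE.
have odd_rect := rectangular_join
  (S_rect _ _ (mpp_definable_count def_R) kl_gt1) k_gt0 l_gt0.
apply: rect_support_rank1_block => [i j /F2_neq0_eq1 // | i i' j j'].
rewrite !balance_matrix_neq0 // -!odd_count_join.
by move: (odd_rect (enum_val i) (enum_val i') (enum_val j) (enum_val j')); rewrite !inE.
Qed.

Definition split_dup n (I : {set 'I_n}) (t : 'I_n) : 'I_(n + n + 0) :=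
  lshift 0 (if t \in I then lshift n t else rshift n t).

Lemma tri_tuple_split_dup n (I : {set 'I_n}) (x y : {ffun 'I_n -> H}) z :
  [ffun t => tri_tuple (erefl (n + n + 0)%N) x y z (split_dup I t)] = mix I x y.
Proof.
apply/ffunP => t; rewrite tri_tupleE !ffunE /split_dup.
by case: (t \in I); rewrite join_lshift ?join_lshift ?join_rshift.
Qed.

Lemma strongly_balanced_rectangular (S : structure H) :
  strongly_balanced 2 S -> strongly_rectangular 2 S.
Proof.
move=> S_bal n R def_R _ I _ _ x x' y y'.
pose R2 := [set a : {ffun 'I_(n + n + 0) -> H} | [ffun t => a (split_dup I t)] \in R].
have M_rect := rank1_block_rect_support
  (S_bal _ R2 (mpp_definable_rename _ def_R) n n 0%N (erefl _)).
have entry u w : (balance_matrix 2 (erefl _) R2 (enum_rank u) (enum_rank w) != 0) =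
    (mix I u w \in R).
  rewrite mxE !enum_rankK /R2 -(dvdn_pcharf (pchar_Fp (isT : prime 2))) /dvdn.
  have [uw_R | uw_R] := boolP (mix I u w \in R).
    rewrite eq_cardT => [|z]; last by rewrite !inE tri_tuple_split_dup.
    by rewrite -cardE card_ffun card_ord.
  by rewrite eq_card0 // => z; rewrite !inE tri_tuple_split_dup (negbTE uw_R).
by have := M_rect (enum_rank x) (enum_rank x') (enum_rank y) (enum_rank y'); rewrite !entry.
Qed.

End Balance.

Theorem lemma6p3 (H : finType) (S : structure H) :
  strongly_rectangular 2 S <-> strongly_balanced 2 S.
Proof.
split; [exact: strongly_rectangular_balanced | exact: strongly_balanced_rectangular].
Qed.
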